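(* Let $r(\mathcal{C},R)$ be a reachability rule and $\mathrm{H}$ a set of Horn rules. Then $r(\mathcal{C},R)\oplus\mathbf{G}(\mathrm{H})$ and $\mathrm{H}$ are permutable (each permutes above the other).
   Context: Fix a countably infinite set $\mathtt{S}$ of sequents (atomic labels), a set $\mathcal{U}$ of vertices, and a non-empty finite set $\mathtt{E}$ of edge types. A g-sequent is $\mathcal{G}=(\mathcal{V},\mathcal{E},\mathcal{L})$ with $\mathcal{V}\subseteq\mathcal{U}$, $\mathcal{E}=\{\mathcal{E}_a\mid a\in\mathtt{E}\}$, $\mathcal{E}_a\subseteq\mathcal{V}\times\mathcal{V}$, $\mathcal{L}:\mathcal{V}\to\mathtt{S}$; $\mathcal U(\mathcal G):=\mathcal V$. It is written $\Gamma\vdash\Delta$ with $\Gamma$ the set of edge atoms $w\mathcal{E}_a u$ ($(w,u)\in\mathcal{E}_a$) and $\Delta$ the set of prefixed sequents $w:S$ ($\mathcal{L}(w)=S$); $\mathtt{PS}=\mathcal{U}\times\mathtt{S}$; commas denote disjoint union. Let $\overline{\mathtt E}=\{\bar a\mid a\in\mathtt E\}$, $\bar{\bar z}=z$, and for a string $s=x_1\cdots x_n$ over $\mathtt E\cup\overline{\mathtt E}$ let $\bar s=\bar x_n\cdots\bar x_1$; $\varepsilon$ is the empty string. Paths: $\mathcal{G}\models u\xrightarrow{a}w$ iff $(u,w)\in\mathcal{E}_a$; $\mathcal{G}\models u\xrightarrow{\bar a}w$ iff $(w,u)\in\mathcal{E}_a$; $\mathcal G\models u\xrightarrow{\varepsilon}w$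 iff $u=w$; $\mathcal{G}\models u\xrightarrow{xs}w$ iff some $v\in\mathcal V$ has $u\xrightarrow{x}v$ and $v\xrightarrow{s}w$; for a set $\mathscr L$ of strings, $u\xrightarrow{\mathscr L}w$ iff $u\xrightarrow{s}w$ for some $s\in\mathscr L$. An $\mathtt{E}$-system is a finite set $\mathbf{G}$ of production rules $x\longrightarrow t$ with $x\in\mathtt{E}\cup\overline{\mathtt{E}}$ and $t$ a string, such that $x\longrightarrow t\in\mathbf{G}$ iff $\bar x\longrightarrow\bar t\in\mathbf{G}$. $t\longrightarrow_{\mathbf{G}}t'$ iff $t'$ arises from $t$ by replacing one occurrence of the left side of a rule of $\mathbf G$ by its right side; $\longrightarrow^*_{\mathbf G}$ is its reflexive-transitive closure, and $\mathbf{G}(s)=\{t\mid s\longrightarrow^*_{\mathbf{G}}t\}$. A sequent constraint is a relation $R\subseteq\mathtt{S}^n\times 2^{\mathtt{PS}}$; $S_1,\dots,S_n,\Delta$ satisfy $R$ iff $(S_{\pi(1)},\dots,S_{\pi(n)},\Delta)\in R$ for some permutation $\pi$. A reachability rule $r(\mathcal C,R)$ has premises $\Gamma\vdash\Delta,w:S_i,u:S'_i$ ($i\in[n]$) and conclusion $\Gamma\vdash\Delta,w:S,u:S'$, where $\mathcal{C}=(C_1,\dots,C_n)$, each $C_i$ is a one-edge tree $(\{w,u\},\{(w,u)\},L_i)$ with $L_i(w,u)=\mathbf{G}_i(a_i)$ for some $a_i\in\mathtt E$ and $\mathtt E$-system $\mathbf G_i$, the $i$-th premise satisfies $\mathcal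 G\models w\xrightarrow{\mathbf G_i(a_i)}u$, and $S_1,S'_1,\dots,S_n,S'_n,S,S',\Delta$ satisfy $R$. For a string $s=x_1\cdots x_n$, $w\mathcal{E}_s u$ abbreviates edge atoms $w\mathcal{E}_{x_1}v_1,\dots,v_{n-1}\mathcal{E}_{x_n}u$, where $v\mathcal E_{\bar a}z$ means $z\mathcal E_a v$ and $w\mathcal E_\varepsilon u$ means $w=u$. A forward Horn rule $h_f$ (for $a\in\mathtt E$, string $s$) has premise $\Gamma,w\mathcal{E}_s u,w\mathcal{E}_a u\vdash\Delta$ and conclusion $\Gamma,w\mathcal{E}_s u\vdash\Delta$; a backward Horn rule $h_b$ is the same with $w\mathcal{E}_a u$ replaced by $u\mathcal{E}_a w$. Their grammars are $\mathbf{G}(h_f)=\{a\longrightarrow s,\bar a\longrightarrow\bar s\}$ and $\mathbf{G}(h_b)=\{\bar a\longrightarrow s,a\longrightarrow\bar s\}$; for a set $\mathrm H$ of Horn rules $\mathbf G(\mathrm H)$ is the union of their grammars. Absorb: $r(\mathcal C,R)\oplus\mathbf G$ is the reachability rule $r(\mathcal C',R)$ where each label $\mathbf G_i(a_i)$ of $\mathcal C$ is replaced by $(\mathbf G_i\cup\mathbf G)(a_i)$. Permutation: $\mathrm{R}_1$ permutes above $\mathrm{R}_2$ iff whenever $\mathcal{G}$ is obtained from $\mathcal{G}_1,\dots,\mathcal{G}_n$ by an application of some $\sigma\in\mathrm{R}_2$ followed by an application of some $\rho\in\mathrm{R}_1$, then $\mathcal{G}$ can be obtained from $\mathcal{G}_1,\dots,\mathcal{G}_n$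 by applications of $\rho$ followed by an application of $\sigma$; permutable means each permutes above the other. *)

From Stdlib Require Import List Permutation Relation_Operators.
Import ListNotations.
Set Implicit Arguments.

Section GSeq.
Variables (U S E : Type).

Inductive letter := Fw (a : E) | Bw (a : E).

Definition bar (x : letter) : letter :=
  match x with Fw a => Bw a | Bw a => Fw a end.

Definition barstr (s : list letter) : list letter := rev (map bar s).

(* a finite set of production rules x --> t *)
Definition esys := list (letter * list letter).

Definition is_esys (G : esys) : Prop :=
  forall x t, In (x, t) G <-> In (bar x, barstr t) G.

Definition gstep (G : esys) (t t' : list letter) : Prop :=
  exists l1 l2 x r, In (x, r) G /\ t = l1 ++ x :: l2 /\ t' = l1 ++ r ++ l2.

Definition lang (G : esys) (s : list letter) : list letter -> Prop :=
  fun t => clos_refl_trans _ (gstep G) s t.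

(* A g-sequent Γ ⊢ Δ: gE a w u means the edge atom w E_a u is in Γ,
   gL w S means the prefixed sequent w:S is in Δ.  The vertex set is the
   domain of the labelling. *)
Record gseq := mkG { gE : E -> U -> U -> Prop ; gL : U -> S -> Prop }.

Definition gV (G : gseq) (w : U) : Prop := exists T, gL G w T.

Definition wf (G : gseq) : Prop :=
  (forall w T1 T2, gL G w T1 -> gL G w T2 -> T1 = T2) /\
  (forall a w u, gE G a w u -> gV G w /\ gV G u).

Definition step1 (G : gseq) (u : U) (x : letter) (v : U) : Prop :=
  match x with Fw a => gE G a u v | Bw a => gE G a v u end.

Fixpoint gpath (G : gseq) (u : U) (s : list letter) (w : U) : Prop :=
  match s with
  | [] => u = w
  | x :: s' => exists v, gV G v /\ step1 G u x v /\ gpath G v s' w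
  end.

Definition reachL (G : gseq) (u : U) (L : list letter -> Prop) (w : U) : Prop :=
  exists s, L s /\ gpath G u s w.

Definition rule := list gseq -> gseq -> Prop.

(* the sequence C = (C_1..C_n) is given by the pairs (a_i, G_i): C_i is the
   one-edge tree w --> u labelled G_i(a_i) *)
Record rrule := mkR {
  rC : list (E * esys);
  rR : list S -> (U -> S -> Prop) -> Prop }.

Definition valid_rrule (r : rrule) : Prop :=
  Forall (fun p => is_esys (snd p)) (rC r).

Definition sat (R : list S -> (U -> S -> Prop) -> Prop)
  (l : list S) (D : U -> S -> Prop) : Prop :=
  exists l', Permutation l l' /\ R l' D.

Definition ext2 (D : U -> S -> Prop) (w : U) (T : S) (u : U) (T' : S) :
  U -> S -> Prop :=
  fun x X => D x X \/ (x = w /\ X = T) \/ (x = u /\ X = T').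

Definition disj2 (D : U -> S -> Prop) (w : U) (T : S) (u : U) (T' : S) : Prop :=
  ~ D w T /\ ~ D u T' /\ ~ (w = u /\ T = T').

Definition rr_app (r : rrule) : rule := fun ps c =>
  exists (Gam : E -> U -> U -> Prop) (D : U -> S -> Prop) (w u : U) (T T' : S)
         (prem : list (S * S)),
    length prem = length (rC r) /\
    length ps = length prem /\
    wf c /\
    disj2 D w T u T' /\
    (forall a x y, gE c a x y <-> Gam a x y) /\
    (forall x X, gL c x X <-> ext2 D w T u T' x X) /\
    (forall i p Ti Ti' a Gi,
        nth_error ps i = Some p -> nth_error prem i = Some (Ti, Ti') ->
        nth_error (rC r) i = Some (a, Gi) ->
        wf p /\ disj2 D w Ti u Ti' /\
        (forall b x y, gE p b x y <-> Gam b x y) /\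
        (forall x X, gL p x X <-> ext2 D w Ti u Ti' x X) /\
        reachL p w (lang Gi [Fw a]) u) /\
    sat (rR r) (flat_map (fun q => [fst q; snd q]) prem ++ [T; T']) D.

Definition absorb (r : rrule) (G : esys) : rrule :=
  mkR (map (fun p => (fst p, snd p ++ G)) (rC r)) (rR r).

Inductive hkind := Forward | Backward.
Record horn := mkH { hk : hkind ; ha : E ; hs : list letter }.

Definition atom (x : letter) (w v : U) : E * U * U :=
  match x with Fw a => (a, w, v) | Bw a => (a, v, w) end.

(* A is the list of edge atoms abbreviated by  w E_s u  (for some choice of
   intermediate vertices) *)
Fixpoint patoms (w : U) (s : list letter) (u : U) (A : list (E * U * U)) : Prop :=
  match s with
  | [] => w = u /\ A = []
  | x :: s' => exists v A', A = atom x w v :: A' /\ patoms v s' u A'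
  end.

Definition horn_app (h : horn) : rule := fun ps c =>
  exists p, ps = [p] /\ wf p /\ wf c /\
  exists (Gam : E -> U -> U -> Prop) (w u : U) (A : list (E * U * U)),
    let e := match hk h with Forward => (ha h, w, u) | Backward => (ha h, u, w) end in
    patoms w (hs h) u A /\
    (forall b x y, In (b, x, y) A -> ~ Gam b x y) /\
    ~ Gam (fst (fst e)) (snd (fst e)) (snd e) /\ ~ In e A /\
    (forall b x y, gE p b x y <-> Gam b x y \/ In (b, x, y) A \/ (b, x, y) = e) /\
    (forall b x y, gE c b x y <-> Gam b x y \/ In (b, x, y) A) /\
    (forall x X, gL p x X <-> gL c x X).

Definition horn_grammar (h : horn) : esys :=
  match hk h with
  | Forward => [(Fw (ha h), hs h); (Bw (ha h), barstr (hs h))]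
  | Backward => [(Bw (ha h), hs h); (Fw (ha h), barstr (hs h))]
  end.

Definition grammarH (H : list horn) : esys := flat_map horn_grammar H.

(* R1 permutes above R2: if G is obtained from G_1..G_n by an application of
   σ ∈ R2 (conclusion C) followed by an application of ρ ∈ R1 (whose premises
   are C), then G is obtained from G_1..G_n by applications of ρ (one on each
   G_i, giving C_i) followed by an application of σ to C_1..C_n. *)
Definition permutes_above (R1 R2 : rule -> Prop) : Prop :=
  forall (sigma rho : rule), R2 sigma -> R1 rho ->
  forall (Gs : list gseq) (C G : gseq) (ps : list gseq),
    sigma Gs C -> ps <> [] -> Forall (eq C) ps -> rho ps G ->
    exists Cs : list gseq,
      Forall2 (fun Gi Ci => exists qs, qs <> [] /\ Forall (eq Gi) qs /\ rho qs Ci) Gs Cs /\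
      sigma Cs G.

Definition permutable (R1 R2 : rule -> Prop) : Prop :=
  permutes_above R1 R2 /\ permutes_above R2 R1.

Definition horn_rules (H : list horn) : rule -> Prop :=
  fun rho => exists h, In h H /\ rho = horn_app h.

Definition single_rule (r : rule) : rule -> Prop := fun rho => rho = r.

End GSeq.

(* A Horn rule only deletes an edge e whose endpoints are already joined by a
   path w -s-> u, and it leaves all labels alone.
   If the Horn rule comes first, the reachability rule can equally be applied
   with e still present, since paths only get more numerous when edges are
   added.  If the reachability rule comes first, every path of a premise that
   crosses e can be rerouted along s (or along its reverse bar(s)); the
   productions a -> s and bar(a) -> bar(s) of G(H) (or their backward
   counterparts) turn the old path label into the new one, so the rerouted
   label still lies in the language of the absorbed grammar. *)
From Stdlib Require Import List Relation_Operators.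
Import ListNotations.
Set Implicit Arguments.

Lemma nth_error_length_eq {A B : Type} {l1 : list A} {l2 : list B} {i x} :
  length l1 = length l2 -> nth_error l1 i = Some x -> exists y, nth_error l2 i = Some y.
Proof.
  intros Hlen Hx.
  assert (Hi : nth_error l2 i <> None).
  { apply nth_error_Some. rewrite <- Hlen. apply nth_error_Some. congruence. }
  destruct (nth_error l2 i) as [y|]; [now exists y | congruence].
Qed.

Lemma Forall2_map_r (A B : Type) (R : A -> B -> Prop) (f : A -> B) (l : list A) :
  (forall x, In x l -> R x (f x)) -> Forall2 R l (map f l).
Proof.
  induction l as [|x l IH]; simpl; intros Hf; constructor; auto.
Qed.

Section GraphSequents.
Variables (U S E : Type).

Definition edges_on_vertices (G : gseq U S E) : Prop :=
  forall a x y, gE G a x y -> gV G x /\ gV G y.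

Definition horn_edge (h : horn E) (w u : U) : E * U * U :=
  match hk h with Forward => (ha h, w, u) | Backward => (ha h, u, w) end.

Lemma gpath_mono (G1 G2 : gseq U S E) :
  (forall x, gV G1 x -> gV G2 x) -> (forall b x y, gE G1 b x y -> gE G2 b x y) ->
  forall s x y, gpath G1 x s y -> gpath G2 x s y.
Proof.
  intros HV HE s; induction s as [|l s IH]; simpl; intros x y Hp; [exact Hp|].
  destruct Hp as [v [Hv [Hl Hp]]].
  exists v; split; [auto|split; [|auto]].
  destruct l; simpl in *; auto.
Qed.

Lemma gpath_app (G : gseq U S E) s1 s2 x y z :
  gpath G x s1 y -> gpath G y s2 z -> gpath G x (s1 ++ s2) z.
Proof.
  revert x; induction s1 as [|l s1 IH]; simpl; intros x H1 H2.
  - now subst.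
  - destruct H1 as [v [Hv [Hl Hp]]]. exists v; eauto.
Qed.

Lemma gpath_step (G : gseq U S E) x l y :
  edges_on_vertices G -> step1 G x l y -> gpath G x [l] y.
Proof.
  intros HG Hl. exists y. split; [|now split].
  destruct l; apply HG in Hl; tauto.
Qed.

Lemma gpath_barstr (G : gseq U S E) :
  edges_on_vertices G -> forall s x y, gpath G x s y -> gpath G y (barstr s) x.
Proof.
  intros HG s; induction s as [|l s IH]; simpl; intros x y Hp.
  - now subst.
  - destruct Hp as [v [_ [Hl Hp]]]. unfold barstr; simpl.
    apply gpath_app with v; [now apply IH|].
    apply gpath_step; [exact HG|]. now destruct l.
Qed.

Lemma patoms_gpath (G : gseq U S E) :
  edges_on_vertices G ->
  forall s w u A, patoms w s u A -> (forall b x y, In (b, x, y) A -> gE G b x y) ->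
  gpath G w s u.
Proof.
  intros HG s; induction s as [|l s IH]; simpl; intros w u A HA HAG.
  - tauto.
  - destruct HA as [v [A' [-> HA']]].
    assert (Hl : step1 G w l v) by (destruct l; apply HAG; now left).
    exists v. split; [destruct l; apply HG in Hl; tauto|]. split; [exact Hl|].
    apply IH with A'; [exact HA'|]. intros b x y Hin; apply HAG; now right.
Qed.

Lemma lang_cons (Gr : esys E) l t t' : lang Gr t t' -> lang Gr (l :: t) (l :: t').
Proof.
  induction 1 as [t t' [l1 [l2 [x [r [Hin [-> ->]]]]]]| |].
  - apply rt_step. now exists (l :: l1), l2, x, r.
  - apply rt_refl.
  - eapply rt_trans; eauto.
Qed.

Lemma lang_head (Gr : esys E) x r t : In (x, r) Gr -> lang Gr (x :: t) (r ++ t).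
Proof. intros Hin. apply rt_step. now exists [], t, x, r. Qed.

Lemma horn_grammar_reroutes {G : gseq U S E} {h : horn E} {w u A} :
  edges_on_vertices G -> patoms w (hs h) u A ->
  (forall b x y, In (b, x, y) A -> gE G b x y) ->
  forall x v v', atom x v v' = horn_edge h w u ->
  exists r, In (x, r) (horn_grammar h) /\ gpath G v r v'.
Proof.
  intros HG HA HAG x v v' Hx.
  assert (Hs : gpath G w (hs h) u) by (eapply patoms_gpath; eauto).
  assert (Hbs : gpath G u (barstr (hs h)) w) by now apply gpath_barstr.
  unfold horn_grammar, horn_edge in *.
  destruct x as [b|b], (hk h); simpl in Hx; injection Hx as -> -> ->;
    eexists; (split; [simpl; auto|eassumption]).
Qed.

Lemma gpath_reroute_horn_edge (Gp Gq : gseq U S E) (Gr : esys E) (h : horn E) w u A :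
  edges_on_vertices Gq -> (forall x, gV Gp x -> gV Gq x) ->
  (forall b x y, gE Gp b x y -> gE Gq b x y \/ (b, x, y) = horn_edge h w u) ->
  (forall b x y, In (b, x, y) A -> gE Gq b x y) ->
  patoms w (hs h) u A -> incl (horn_grammar h) Gr ->
  forall t v z, gpath Gp v t z -> exists t', lang Gr t t' /\ gpath Gq v t' z.
Proof.
  intros HGq HV HE HAG HA Hincl t; induction t as [|l t IH]; simpl; intros v z Hp.
  - exists []. split; [apply rt_refl|exact Hp].
  - destruct Hp as [v1 [Hv1 [Hl Hp]]].
    destruct (IH _ _ Hp) as [t' [Ht' Hp']].
    assert (Hl' : step1 Gq v l v1 \/ atom l v v1 = horn_edge h w u)
      by (destruct l; now apply HE).
    destruct Hl' as [Hl'|He].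
    + exists (l :: t'). split; [now apply lang_cons|].
      exists v1; auto.
    + destruct (horn_grammar_reroutes HGq HA HAG _ _ _ He) as [r [Hr Hpr]].
      exists (r ++ t'). split.
      * eapply rt_trans; [apply lang_cons, Ht'|]. now apply lang_head, Hincl.
      * eapply gpath_app; eauto.
Qed.

Lemma ext2_vertex (D : U -> S -> Prop) w u T T' T2 T2' x X :
  ext2 D w T u T' x X -> exists Y, ext2 D w T2 u T2' x Y.
Proof. unfold ext2; intros [HD|[[-> ->]|[-> ->]]]; eauto. Qed.

Lemma rr_app_wf {r : rrule U S E} {ps c} : rr_app r ps c -> wf c.
Proof. intros [Gam [D [w [u [T [T' [prem [_ [_ [Hwf _]]]]]]]]]]. exact Hwf. Qed.

Lemma rr_app_premise {r : rrule U S E} {ps c p} :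
  rr_app r ps c -> In p ps ->
  wf p /\ (forall b x y, gE p b x y <-> gE c b x y) /\ (forall x, gV p x -> gV c x).
Proof.
  intros [Gam [D [w [u [T [T' [prem [Hlen1 [Hlen2 [_ [_ [HcE [HcL [Hprem _]]]]]]]]]]]]]] Hin.
  destruct (In_nth_error _ _ Hin) as [i Hi].
  destruct (nth_error_length_eq Hlen2 Hi) as [[Ti Ti'] Hpi].
  destruct (nth_error_length_eq Hlen1 Hpi) as [[a Gi] Hri].
  destruct (Hprem i p Ti Ti' a Gi Hi Hpi Hri) as [Hwf [_ [HpE [HpL _]]]].
  split; [exact Hwf|split].
  - intros b x y. now rewrite HpE, HcE.
  - intros x [X HX]. apply HpL in HX.
    destruct (ext2_vertex T T' HX) as [Y HY]. exists Y. now apply HcL.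
Qed.

Lemma rr_app_map (r : rrule U S E) (f : gseq U S E -> gseq U S E) ps c c'
  (Gam' : E -> U -> U -> Prop) :
  rr_app r ps c ->
  (forall p, In p ps ->
     wf (f p) /\ (forall x X, gL (f p) x X <-> gL p x X) /\
     (forall b x y, gE (f p) b x y <-> Gam' b x y) /\
     (forall a Gi w u, In (a, Gi) (rC r) ->
        reachL p w (lang Gi [Fw a]) u -> reachL (f p) w (lang Gi [Fw a]) u)) ->
  wf c' -> (forall x X, gL c' x X <-> gL c x X) -> (forall b x y, gE c' b x y <-> Gam' b x y) ->
  rr_app r (map f ps) c'.
Proof.
  intros [Gam [D [w [u [T [T' [prem [Hlen1 [Hlen2 [_ [Hdisj [_ [HcL [Hprem Hsat]]]]]]]]]]]]]]
    Hf Hwf' Hc'L Hc'E.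
  exists Gam', D, w, u, T, T', prem.
  split; [exact Hlen1|]. split; [now rewrite length_map|].
  split; [exact Hwf'|]. split; [exact Hdisj|]. split; [exact Hc'E|].
  split; [intros x X; now rewrite Hc'L|]. split; [|exact Hsat].
  intros i q Ti Ti' a Gi Hq Hpi Hri.
  rewrite nth_error_map in Hq.
  destruct (nth_error ps i) as [p|] eqn:Hp; inversion Hq; subst q.
  destruct (Hprem i p Ti Ti' a Gi Hp Hpi Hri) as [_ [Hd [_ [HpL Hreach]]]].
  destruct (Hf p (nth_error_In _ _ Hp)) as [Hwf [HfL [HfE Hfreach]]].
  split; [exact Hwf|]. split; [exact Hd|]. split; [exact HfE|].
  split; [intros x X; now rewrite HfL|].
  exact (Hfreach a Gi w u (nth_error_In _ _ Hri) Hreach).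
Qed.

Lemma horn_app_inv {h : horn E} {ps} {c : gseq U S E} :
  horn_app h ps c ->
  exists p w u A, ps = [p] /\ wf p /\ wf c /\ (forall x X, gL p x X <-> gL c x X) /\
    patoms w (hs h) u A /\ (forall b x y, In (b, x, y) A -> gE c b x y) /\
    (forall b x y, gE p b x y <-> gE c b x y \/ (b, x, y) = horn_edge h w u).
Proof.
  intros [p [-> [Hwfp [Hwfc [Gam [w [u [A [HA [_ [_ [_ [HpE [HcE HL]]]]]]]]]]]]]].
  exists p, w, u, A. do 4 (split; [easy|]). split; [exact HA|]. split.
  - intros b x y Hin. apply HcE. now right.
  - intros b x y. rewrite HpE, HcE. tauto.
Qed.

Lemma horn_app_transfer (h : horn E) (p c p' c' : gseq U S E) :
  horn_app h [p] c -> wf p' -> wf c' ->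
  (forall b x y, gE p' b x y <-> gE p b x y) -> (forall b x y, gE c' b x y <-> gE c b x y) ->
  (forall x X, gL p' x X <-> gL c' x X) ->
  horn_app h [p'] c'.
Proof.
  intros [q [Hq [_ [_ [Gam [w [u [A [HA [HAG [He [HeA [HpE [HcE _]]]]]]]]]]]]]] Hwfp Hwfc Hp Hc HL.
  injection Hq as <-.
  exists p'. split; [reflexivity|]. split; [exact Hwfp|]. split; [exact Hwfc|].
  exists Gam, w, u, A. cbv zeta.
  split; [exact HA|]. split; [exact HAG|]. split; [exact He|]. split; [exact HeA|].
  split; [intros b x y; now rewrite Hp|].
  split; [intros b x y; now rewrite Hc|]. exact HL.
Qed.

Lemma rr_permutes_above_horn (r : rrule U S E) (H : list (horn E)) :
  permutes_above (single_rule (rr_app r)) (@horn_rules U S E H).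
Proof.
  intros sigma rho [h [_ ->]] -> Gs C G ps Hhorn Hps HpsC Hrr.
  destruct (horn_app_inv Hhorn) as [p [w [u [A [-> [Hwfp [_ [HL [_ [_ HpE]]]]]]]]]].
  set (G' := mkG (fun b x y => gE G b x y \/ (b, x, y) = horn_edge h w u) (gL G)).
  assert (HC : In C ps) by (destruct ps as [|q ps]; [easy|]; inversion HpsC; now left).
  destruct (rr_app_premise Hrr HC) as [_ [HCG HVCG]].
  assert (HVp : forall x, gV p x -> gV G x).
  { intros x [X HX]. apply HVCG. exists X. now apply HL. }
  assert (HG'p : forall b x y, gE G' b x y <-> gE p b x y).
  { intros b x y; simpl. rewrite HpE, HCG. tauto. }
  assert (Hwf' : wf G').
  { destruct (rr_app_wf Hrr) as [Hfun HGV]. split; [exact Hfun|].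
    intros b x y [Hb|Hb]; [exact (HGV _ _ _ Hb)|].
    assert (Hb' : gE p b x y) by (apply HpE; now right).
    apply Hwfp in Hb'. split; apply HVp; tauto. }
  exists [G']. split.
  - constructor; [|constructor].
    exists (map (fun _ => p) ps). split; [now destruct ps|]. split.
    { apply Forall_forall. intros q Hq. apply in_map_iff in Hq as [? [<- _]]. reflexivity. }
    apply rr_app_map with (c := G) (Gam' := gE p); [exact Hrr| |exact Hwf'|simpl; tauto|exact HG'p].
    intros q Hq. rewrite Forall_forall in HpsC. rewrite <- (HpsC q Hq).
    split; [exact Hwfp|]. split; [exact HL|]. split; [tauto|].
    intros a Gi v z _ [t [Ht Hpt]]. exists t. split; [exact Ht|].
    revert Hpt. apply gpath_mono.
    + intros x [X HX]. exists X. now apply HL.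
    + intros b x y Hb. apply HpE. now left.
  - apply horn_app_transfer with p C; try assumption.
    + exact (rr_app_wf Hrr).
    + intros b x y. now rewrite HCG.
    + simpl; tauto.
Qed.

Lemma horn_grammar_incl {H : list (horn E)} {h} : In h H -> incl (horn_grammar h) (grammarH H).
Proof. intros Hh x Hx. apply in_flat_map. eauto. Qed.

Lemma absorb_incl (r : rrule U S E) (G0 : esys E) a Gi :
  In (a, Gi) (rC (absorb r G0)) -> incl G0 Gi.
Proof.
  simpl. intros Hin. apply in_map_iff in Hin as [[a' G'] [Heq _]].
  injection Heq as _ <-. apply incl_appr, incl_refl.
Qed.

Lemma horn_permutes_above_rr (r : rrule U S E) (H : list (horn E)) :
  (forall a Gi, In (a, Gi) (rC r) -> incl (grammarH H) Gi) ->
  permutes_above (@horn_rules U S E H) (single_rule (rr_app r)).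
Proof.
  intros Hincl sigma rho -> [h [Hh ->]] Gs C G ps Hrr _ HpsC Hhorn.
  destruct (horn_app_inv Hhorn) as [p [w [u [A [-> [_ [HwfG [HL [HA [HAG HCE]]]]]]]]]].
  assert (p = C) by (inversion HpsC; auto). subst p.
  set (f := fun Gi : gseq U S E => mkG (gE G) (gL Gi)).
  assert (Hf : forall Gi, In Gi Gs ->
            wf Gi /\ (forall b x y, gE Gi b x y <-> gE C b x y) /\ wf (f Gi)).
  { intros Gi Hin. destruct (rr_app_premise Hrr Hin) as [Hwf [HGiC _]].
    split; [exact Hwf|]. split; [exact HGiC|]. split; [apply Hwf|].
    intros b x y Hb. apply (proj2 Hwf b). apply HGiC, HCE. now left. }
  exists (map f Gs). split.
  - apply Forall2_map_r. intros Gi Hin. destruct (Hf Gi Hin) as [HwfGi [HGiC Hwff]].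
    exists [Gi]. split; [easy|]. split; [now constructor|].
    apply horn_app_transfer with C G; try assumption; simpl; tauto.
  - apply rr_app_map with (c := C) (Gam' := gE G);
      [exact Hrr| |exact HwfG|intros x X; now rewrite HL|simpl; tauto].
    intros Gi Hin. destruct (Hf Gi Hin) as [_ [HGiC Hwff]].
    split; [exact Hwff|]. split; [simpl; tauto|]. split; [simpl; tauto|].
    intros a Gr v z HaGr [t [Ht Hpt]].
    assert (Hreroute : exists t', lang Gr t t' /\ gpath (f Gi) v t' z).
    { apply gpath_reroute_horn_edge with Gi h w u A; auto.
      - exact (proj2 Hwff).
      - intros b x y Hb. now apply HGiC, HCE in Hb.
      - exact (incl_tran (horn_grammar_incl Hh) (Hincl _ _ HaGr)). }
    destruct Hreroute as [t' [Htt' Hpt']].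
    exists t'. split; [eapply rt_trans; eauto|exact Hpt'].
Qed.

End GraphSequents.

Theorem mainTheorem3 (U S E : Type)
  (HS : exists f : nat -> S, (forall m n, f m = f n -> m = n) /\ (forall T, exists n, f n = T))
  (HE : exists l : list E, l <> [] /\ forall a, In a l)
  (r : rrule U S E) (Hr : valid_rrule r) (H : list (horn E)) :
  permutable (single_rule (rr_app (absorb r (grammarH H)))) (@horn_rules U S E H).
Proof.
  split.
  - apply rr_permutes_above_horn.
  - apply horn_permutes_above_rr. apply absorb_incl.
Qed.
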